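(* Let $G$ be a symmetric star topology with compute nodes $V_C$, where $w_v$ is the bandwidth of the edges between compute node $v$ and the center. Let $R,S$ be sets with $|R|<|S|$, $N=|R|+|S|$, initially partitioned among the compute nodes, node $v$ holding $R_v\subseteq R$, $S_v\subseteq S$, $N_v=|R_v|+|S_v|$. Let $V_\alpha=\{v\in V_C:\min\{N_v,N-N_v\}<|R|\}$ and $V_\beta=V_C\setminus V_\alpha$. If $\max_vN_v\le N/2$, then any algorithm computing $R\times S$ has (tuple) cost $\Omega(C)$, where \[C=\min\Big\{\frac{|S|}{\max_vw_v},\ \frac{\sum_{u\in V_\alpha}|S_u|}{2\sum_{u\in V_\beta}w_u},\ \mathcal V\big(R,\textstyle\bigcup_{u\in V_\alpha}S_u,V_\alpha\big)\Big\}.\]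
   Context: Topology-aware model: the network is a directed graph; each edge $e$ has bandwidth $w_e>0$; compute nodes store data and compute, other nodes only route. A symmetric star topology has compute nodes each connected to a single central routing node by an edge in each direction with equal bandwidth. The input is partitioned without duplication; the algorithm knows topology, bandwidths and local fragment sizes. Computation proceeds in synchronous rounds; the tuple cost of a round is $\max_e|Y(e)|/w_e$ with $|Y(e)|$ the number of elements routed through edge $e$; total cost is the sum over rounds. Computing $R\times S$ means every pair $(r,s)\in R\times S$ is emitted by at least one compute node holding both $r$ and $s$. For sets $R',S'$ and a set $U$ of compute nodes, $\mathcal V(R',S',U)$ denotes the smallest $C\ge0$ satisfying $\sum_{v\in U}\min\{C\cdot w_v,|R'|\}\cdot C\cdot w_v\ge|R'|\cdot|S'|$. *)

From HB Require Import structures.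
From mathcomp Require Import all_boot all_order all_algebra.
From mathcomp Require Import classical_sets reals.
Set Implicit Arguments. Unset Strict Implicit. Unset Printing Implicit Defensive.
Import Order.TTheory GRing.Theory Num.Theory.
Local Open Scope ring_scope.

(* Symmetric star topology: the compute nodes form the finType [V]; every
   compute node [v] is linked to the single central routing node by one edge
   in each direction, both of bandwidth [w v].
   Data elements: elements of R live in finType [A], elements of S in [B];
   an element is of type [A + B] (so R and S are disjoint as elements). *)

Section Model.
Variables (V A B : finType) (RR : realType).

Definition elt := (A + B)%type.

(* One synchronous round: [snd u] = set of elements routed through the
   edge u -> center, [rcv v] = set of elements routed through the edge
   center -> v. *)
Record round := Round { snd : V -> {set elt}; rcv : V -> {set elt} }.

Definition round_ok (K : V -> {set elt}) (r : round) : Prop :=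
  (forall u, snd r u \subset K u) /\
  (forall v, rcv r v \subset \bigcup_(u : V) snd r u).

Definition step (K : V -> {set elt}) (r : round) : V -> {set elt} :=
  fun v => K v :|: rcv r v.

Fixpoint exec_ok (K : V -> {set elt}) (rs : seq round) : Prop :=
  match rs with
  | [::] => True
  | r :: rs' => round_ok K r /\ exec_ok (step K r) rs'
  end.

Fixpoint final (K : V -> {set elt}) (rs : seq round) : V -> {set elt} :=
  match rs with
  | [::] => K
  | r :: rs' => final (step K r) rs'
  end.

Definition round_cost (w : V -> RR) (r : round) : RR :=
  \big[Num.max/0]_(v : V)
     Num.max ((#|snd r v|)%:R / w v) ((#|rcv r v|)%:R / w v).

Definition cost (w : V -> RR) (rs : seq round) : RR :=
  \sum_(r <- rs) round_cost w r.

Definition Rv (Rs : {set A}) (locA : A -> V) (v : V) : {set A} :=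
  [set a in Rs | locA a == v].
Definition Sv (Ss : {set B}) (locB : B -> V) (v : V) : {set B} :=
  [set b in Ss | locB b == v].

Definition init_know (Rs : {set A}) (Ss : {set B}) (locA : A -> V)
  (locB : B -> V) (v : V) : {set elt} :=
  [set x : elt | match x with
                 | inl a => a \in Rv Rs locA v
                 | inr b => b \in Sv Ss locB v end].

(* R x S computed: every pair is held (hence emittable) by some compute node. *)
Definition computes_product (Rs : {set A}) (Ss : {set B})
  (K : V -> {set elt}) : Prop :=
  forall a b, a \in Rs -> b \in Ss ->
    exists v, (inl a \in K v) && (inr b \in K v).

Definition Nv (Rs : {set A}) (Ss : {set B}) (locA : A -> V) (locB : B -> V) (v : V) : nat :=
  #|Rv Rs locA v| + #|Sv Ss locB v|.

(* The quantity  V(R', S', U)  with |R'| = r, |S'| = s. *)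
Definition Vol (w : V -> RR) (r s : nat) (U : {set V}) : RR :=
  inf [set C : RR | 0 <= C /\
         (r * s)%:R <= \sum_(v in U) Num.min (C * w v) r%:R * (C * w v)]%classic.

Definition Valpha (Rs : {set A}) (Ss : {set B}) (locA : A -> V) (locB : B -> V) : {set V} :=
  let N := (#|Rs| + #|Ss|)%N in
  [set v | minn (Nv Rs Ss locA locB v) (N - Nv Rs Ss locA locB v) < #|Rs|]%N.

Definition Vbeta (Rs : {set A}) (Ss : {set B}) (locA : A -> V) (locB : B -> V) : {set V} := ~: Valpha Rs Ss locA locB.

(* The bound C of the theorem.  The middle term is +infinity (hence dropped
   from the minimum) when V_beta is empty. *)
Definition Cbound (w : V -> RR) (Rs : {set A}) (Ss : {set B}) (locA : A -> V) (locB : B -> V) : RR :=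
  let Va := Valpha Rs Ss locA locB in
  let Vb := Vbeta Rs Ss locA locB in
  let SaSize := (\sum_(u in Va) #|Sv Ss locB u|)%N in
  let t1 := (#|Ss|)%:R / \big[Num.max/0]_(v : V) w v in
  let t3 := Vol w #|Rs| SaSize Va in
  if #|Vb| == 0%N then Num.min t1 t3
  else Num.min t1 (Num.min (SaSize%:R / (2 * \sum_(u in Vb) w u)) t3).

End Model.

(* A node can only learn an element it does not initially hold by receiving it over
   its incoming edge, so after a run of cost T node u knows at most T w_u foreign
   elements.  Since every pair of R x S must meet at some node, covering R x S'
   gives |R| |S'| <= sum_u X_u Y_u, where X_u and Y_u count the elements of R and
   S' known to u at the end.  Apply this to S' = S_alpha, the part of S stored on
   V_alpha, and bound each product by local plus received data: on an alpha node
   N_u < |R|, so the local products account for at most a constant fraction of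
   the pairs.  The exception is when many elements of R sit on alpha nodes while
   S_alpha is small; then covering R x (S \ S_alpha) is used instead.  In the end
   either a single node receives a constant fraction of |S|, or the beta nodes
   jointly receive a constant fraction of |S_alpha|, or the received volumes
   sum_{u in V_alpha} min(T w_u, |R|) T w_u cover a constant fraction of
   |R| |S_alpha|: these are the three terms of C. *)

From HB Require Import structures.
From mathcomp Require Import all_boot all_order all_algebra.
From mathcomp Require Import classical_sets reals.
From mathcomp Require Import ring lra zify.
Set Implicit Arguments.
Unset Strict Implicit.
Unset Printing Implicit Defensive.
Import Order.TTheory GRing.Theory Num.Theory.
Local Open Scope ring_scope.

Lemma min_bounds (R : realDomainType) (y z : R) : 0 <= y -> 0 <= z ->
  [/\ 0 <= Num.min y z, Num.min y z <= y & Num.min y z <= z].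
Proof. by move=> y0 z0; rewrite le_min y0 z0 !ge_min !lexx orbT. Qed.

(* Abstract form of the counting: n = |R|, m = |S|, s = |S_alpha|, [al] is V_alpha,
   a u = |R_u|, b u = |S_u|, x u = T w_u is the receive budget of u, and X, YA, YB
   count the elements of R, S_alpha and S \ S_alpha known to u at the end. *)
Section CountingInequalities.
Variables (R : realFieldType) (V : finType) (al : pred V).
Variables (n m s M Bt : R) (a b x X YA YB : V -> R).
Hypotheses (n_ge0 : 0 <= n) (n_le_m : n <= m) (s_ge0 : 0 <= s) (M_ge0 : 0 <= M).
Hypotheses (a_ge0 : forall u, 0 <= a u) (sum_a : \sum_u a u <= n).
Hypotheses (b_ge0 : forall u, 0 <= b u) (sum_b_al : \sum_(u | al u) b u = s)
  (sum_b_nal : \sum_(u | ~~ al u) b u = m - s).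
Hypothesis al_small : forall u, al u -> a u + b u <= n.
Hypotheses (x_ge0 : forall u, 0 <= x u) (x_le_M : forall u, x u <= M)
  (sum_x_nal : \sum_(u | ~~ al u) x u <= Bt).
Hypotheses (X_ge0 : forall u, 0 <= X u) (X_le_n : forall u, X u <= n)
  (X_le : forall u, X u <= a u + Num.min (x u) n).
Hypotheses (YA_ge0 : forall u, 0 <= YA u)
  (YA_le : forall u, YA u <= (if al u then b u else 0) + Num.min (x u) s).
Hypotheses (YB_ge0 : forall u, 0 <= YB u)
  (YB_le : forall u, YB u <= (if al u then 0 else b u) + x u).
Hypotheses (coverA : n * s <= \sum_u X u * YA u)
  (coverB : n * (m - s) <= \sum_u X u * YB u).

Let q u : R := Num.min (x u) n * x u.
Let Q : R := \sum_(u | al u) q u.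
Let Aa : R := \sum_(u | al u) a u.

Lemma q_ge0 u : 0 <= q u.
Proof. by apply: mulr_ge0 => //; rewrite le_min x_ge0 n_ge0. Qed.

Lemma Q_ge0 : 0 <= Q.
Proof. by apply: sumr_ge0 => u _; apply: q_ge0. Qed.

Lemma a_le_n u : a u <= n.
Proof.
apply: le_trans sum_a; rewrite (bigD1 u) //= lerDl.
exact: sumr_ge0.
Qed.

Lemma Aa_le_n : Aa <= n.
Proof. by apply: le_trans sum_a; rewrite (bigID al) /= lerDl; apply: sumr_ge0. Qed.

Lemma a_le_beta u : ~~ al u -> a u <= n - Aa.
Proof.
move=> hu; rewrite lerBrDr; apply: le_trans sum_a.
rewrite [leRHS](bigID al) /= addrC lerD2r (bigD1 u) //= lerDl.
exact: sumr_ge0.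
Qed.

Lemma x_le_Bt u : ~~ al u -> x u <= Bt.
Proof.
move=> hu; apply: le_trans sum_x_nal; rewrite (bigD1 u) //= lerDl.
exact: sumr_ge0.
Qed.

Lemma b_le_s u : al u -> b u <= s.
Proof.
move=> hu; rewrite -sum_b_al (bigD1 u) //= lerDl.
exact: sumr_ge0.
Qed.

Lemma XYA_le_alpha u : al u ->
  X u * YA u <= (a u + Num.min (x u) n) * (b u + Num.min (x u) s).
Proof.
move=> hu; have [s0 _ _] := min_bounds (x_ge0 u) s_ge0.
by apply: ler_pM => //; have := YA_le u; rewrite hu.
Qed.

Lemma XYA_le_alpha_wide u : al u ->
  X u * YA u <= 29/32 * n * b u + (n / 32 + M) * a u + 33 * q u.
Proof.
move=> hu; apply: le_trans (XYA_le_alpha hu) _.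
have [r0 rx rn] := min_bounds (x_ge0 u) n_ge0; have [t0 tx ts] := min_bounds (x_ge0 u) s_ge0.
rewrite /q; set r := Num.min (x u) n in r0 rx rn *; set t := Num.min (x u) s in t0 tx ts *.
have a0 := a_ge0 u; have b0 := b_ge0 u; have ab_n := al_small hu.
have ab : a u * b u <= 7/8 * n * b u + n / 32 * a u.
  case: (lerP (a u) (7/8 * n)) => h; first nra.
  have : b u <= n / 8 by lra.
  nra.
have at_ : a u * t <= M * a u.
  by rewrite mulrC; apply: ler_wpM2r => //; apply: le_trans tx (x_le_M u).
have rb : r * b u <= n / 32 * b u + 32 * (r * x u).
  by case: (lerP r (n / 32)) => h; nra.
have rt : r * t <= r * x u by apply: ler_wpM2l.
have -> : (a u + r) * (b u + t) = a u * b u + a u * t + r * b u + r * t by ring.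
lra.
Qed.

Lemma XYA_le_alpha_narrow u : al u ->
  X u * YA u <= n / 4 * b u + 2 * Num.min n s * a u + 6 * q u.
Proof.
move=> hu; apply: le_trans (XYA_le_alpha hu) _.
have [r0 rx rn] := min_bounds (x_ge0 u) n_ge0; have [t0 tx ts] := min_bounds (x_ge0 u) s_ge0.
rewrite /q; set r := Num.min (x u) n in r0 rx rn *; set t := Num.min (x u) s in t0 tx ts *.
set mu := Num.min n s.
have a0 := a_ge0 u; have b0 := b_ge0 u; have an := a_le_n u.
have bn : b u <= n by have := al_small hu; lra.
have ab : a u * b u <= a u * mu.
  by apply: ler_wpM2l => //; rewrite le_min bn b_le_s.
have at_ : a u * t <= r * x u + a u * mu.
  case: (lerP n t) => h.
    have -> : r = n by apply/min_idPr; lra.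
    have : 0 <= a u * mu by apply: mulr_ge0 => //; rewrite le_min n_ge0 s_ge0.
    nra.
  have : a u * t <= a u * mu by apply: ler_wpM2l => //; rewrite le_min ltW.
  have : 0 <= r * x u by apply: mulr_ge0; lra.
  lra.
have rb : r * b u <= n / 4 * b u + 4 * (r * x u).
  by case: (lerP r (n / 4)) => h; nra.
have rt : r * t <= r * x u by apply: ler_wpM2l.
have -> : (a u + r) * (b u + t) = a u * b u + a u * t + r * b u + r * t by ring.
lra.
Qed.

Lemma XYA_le_beta u : ~~ al u -> X u * YA u <= n * x u.
Proof.
move=> hu; have [t0 tx _] := min_bounds (x_ge0 u) s_ge0.
have YAx : YA u <= x u by have := YA_le u; rewrite (negbTE hu) add0r => /le_trans; apply.
exact: ler_pM.
Qed.

Lemma XYB_le_alpha u : al u -> X u * YB u <= M * a u + q u.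
Proof.
move=> hu; have [r0 rx rn] := min_bounds (x_ge0 u) n_ge0.
have YBx : YB u <= x u by have := YB_le u; rewrite hu add0r.
have : X u * YB u <= (a u + Num.min (x u) n) * x u by apply: ler_pM.
have : a u * x u <= M * a u by rewrite mulrC; apply: ler_wpM2r.
rewrite /q mulrDl; lra.
Qed.

Lemma XYB_le_beta u : ~~ al u -> X u * YB u <= (n - Aa + Bt) * b u + n * x u.
Proof.
move=> hu; have [r0 rx rn] := min_bounds (x_ge0 u) n_ge0.
have XB : X u <= n - Aa + Bt.
  apply: le_trans (X_le u) _; apply: lerD; first exact: a_le_beta.
  exact: le_trans rx (x_le_Bt hu).
have : X u * YB u <= X u * b u + X u * x u.
  by rewrite -mulrDr; apply: ler_wpM2l => //; have := YB_le u; rewrite (negbTE hu).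
have : X u * b u <= (n - Aa + Bt) * b u by apply: ler_wpM2r.
have : X u * x u <= n * x u by apply: ler_wpM2r.
lra.
Qed.

Lemma sum_alpha_le (c1 c2 c3 : R) (F : V -> R) :
  (forall u, al u -> F u <= c1 * b u + c2 * a u + c3 * q u) ->
  \sum_(u | al u) F u <= c1 * s + c2 * Aa + c3 * Q.
Proof.
move=> hF; apply: le_trans (ler_sum _ hF) _.
by rewrite !big_split /= -!mulr_sumr sum_b_al.
Qed.

Lemma coverA_alpha : n * s <= \sum_(u | al u) X u * YA u + n * Bt.
Proof.
apply: le_trans coverA _; rewrite (bigID al) /= lerD2l.
apply: le_trans (_ : _ <= \sum_(u | ~~ al u) n * x u) _.
  by apply: ler_sum => u; apply: XYA_le_beta.
by rewrite -mulr_sumr; apply: ler_wpM2l.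
Qed.

Lemma coverB_bound : n * (m - s) <= (n - Aa + Bt) * (m - s) + n * Bt + M * Aa + Q.
Proof.
apply: le_trans coverB _; rewrite (bigID al) /=.
have alpha : \sum_(u | al u) X u * YB u <= M * Aa + Q.
  by rewrite mulr_sumr -big_split; apply: ler_sum; apply: XYB_le_alpha.
have beta : \sum_(u | ~~ al u) X u * YB u <= (n - Aa + Bt) * (m - s) + n * Bt.
  apply: le_trans (ler_sum _ XYB_le_beta) _.
  rewrite big_split /= -!mulr_sumr sum_b_nal lerD2l.
  exact: ler_wpM2l.
lra.
Qed.

Lemma volume_wide : m <= 2 * s -> 192 * M <= m -> 128 * Bt <= s -> n * s <= 3168 * Q.
Proof.
move=> ms Mm Bs; have Q0 := Q_ge0; have Aa0 : 0 <= Aa by apply: sumr_ge0.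
(* [lra] and [nra] ignore section hypotheses, hence these copies. *)
have n0 := n_ge0; have nm := n_le_m; have s0 := s_ge0; have M0 := M_ge0.
have S : \sum_(u | al u) X u * YA u <= 29/32 * n * s + (n / 32 + M) * Aa + 33 * Q.
  by apply: sum_alpha_le; apply: XYA_le_alpha_wide.
have : (n / 32 + M) * Aa <= (n / 32 + M) * n
  by apply: ler_wpM2l; [lra | apply: Aa_le_n].
have : n * n <= n * (2 * s) by apply: ler_wpM2l => //; lra.
have : n * M <= n * (m / 192) by apply: ler_wpM2l => //; lra.
have : n * m <= n * (2 * s) by apply: ler_wpM2l.
have : n * Bt <= n * (s / 128) by apply: ler_wpM2l => //; lra.
have := coverA_alpha; nra.
Qed.

Lemma volume_narrow : 2 * s < m -> 192 * M <= m -> 128 * Bt <= s -> n * s <= 3168 * Q.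
Proof.
move=> ms Mm Bs; have Q0 := Q_ge0; have Aa0 : 0 <= Aa by apply: sumr_ge0.
have n0 := n_ge0; have nm := n_le_m; have s0 := s_ge0; have M0 := M_ge0.
have An := Aa_le_n.
have nBt : n * Bt <= n * (s / 128) by apply: ler_wpM2l => //; lra.
set mu := Num.min n s; have mun : mu <= n by rewrite ge_min lexx.
have mus : mu <= s by rewrite ge_min lexx orbT.
have mu0 : 0 <= mu by rewrite le_min n0 s0.
have S : \sum_(u | al u) X u * YA u <= n / 4 * s + 2 * mu * Aa + 6 * Q.
  by apply: sum_alpha_le; apply: XYA_le_alpha_narrow.
have := coverA_alpha.
case: (lerP (2 * mu * Aa) (n * s / 4)) => hmu; first lra.
(* Many elements of R sit on alpha nodes, which hold no element of S \ S_alpha. *)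
have hAa : n / 8 < Aa by nra.
have hs : s < 8 * n by nra.
have := coverB_bound.
have : (n / 16) * (m - s) <= (Aa - Bt) * (m - s) by apply: ler_wpM2r; lra.
have : M * Aa <= (m / 192) * n by apply: ler_pM; lra.
have : n * (m / 2) <= n * (m - s) by apply: ler_wpM2l => //; lra.
have : n * s <= n * m by apply: ler_wpM2l => //; lra.
nra.
Qed.

Lemma counting_trichotomy : m <= 192 * M \/ s <= 128 * Bt \/ n * s <= 3168 * Q.
Proof.
case: (lerP m (192 * M)) => [|/ltW Mm]; first by left.
case: (lerP s (128 * Bt)) => [|/ltW Bs]; first by right; left.
right; right; case: (lerP m (2 * s)) => ms.
  exact: volume_wide.
exact: volume_narrow.
Qed.

End CountingInequalities.

Lemma card_fiber (T V : finType) (D : {set T}) (f : T -> V) (P : pred V) :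
  (\sum_(u | P u) #|[set t in D | f t == u]| = #|[set t in D | P (f t)]|)%N.
Proof.
rewrite -sum1_card (partition_big f P) /=; last by move=> t; rewrite inE => /andP[].
apply: eq_bigr => u Pu; rewrite -sum1_card; apply: eq_bigl => t.
by rewrite !inE; case: (eqVneq (f t) u) => [-> | _]; rewrite ?Pu ?andbT ?andbF.
Qed.

Lemma sum_card_fiber (T V : finType) (D : {set T}) (f : T -> V) :
  (\sum_u #|[set t in D | f t == u]| = #|D|)%N.
Proof. by rewrite (@card_fiber _ _ D f predT); apply: eq_card => t; rewrite inE andbT. Qed.

Lemma card_setX_le_sum_cover (I T1 T2 : finType) (P : {set T1}) (Q : {set T2})
    (F : I -> pred T1) (G : I -> pred T2) :
  (forall p q, p \in P -> q \in Q -> exists i, F i p && G i q) ->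
  (#|P| * #|Q| <= \sum_i #|[set p in P | F i p]| * #|[set q in Q | G i q]|)%N.
Proof.
move=> cover; rewrite -cardsX.
have sub : finset.setX P Q \subset
    \bigcup_i finset.setX [set p in P | F i p] [set q in Q | G i q].
  apply/fintype.subsetP => -[p q]; rewrite inE => /andP[pP qQ].
  have [i /andP[Fp Gq]] := cover p q pP qQ.
  by apply/bigcupP; exists i => //; rewrite !inE /= pP qQ Fp Gq.
apply: leq_trans (subset_leq_card sub) _.
apply: leq_trans (unstable.card_big_setU _ _ _) _.
by apply: leq_sum => i _; rewrite cardsX.
Qed.

Section Execution.
Variables (V A B : finType) (RR : realType) (w : V -> RR).

Lemma cost_ge0 (rs : seq (round V A B)) : 0 <= cost w rs.
Proof. by apply: sumr_ge0 => r _; apply: bigmax_ge_id. Qed.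

Hypothesis w_gt0 : forall v, 0 < w v.

Lemma card_rcv_le_round_cost (r : round V A B) u : #|rcv r u|%:R <= round_cost w r * w u.
Proof.
rewrite -ler_pdivrMr //; apply: le_trans (le_bigmax _ _ u).
by rewrite le_max lexx orbT.
Qed.

Lemma card_final_setD_le_rcv K (rs : seq (round V A B)) u :
  (#|final K rs u :\: K u| <= \sum_(r <- rs) #|rcv r u|)%N.
Proof.
elim: rs K => [|r rs IH] K /=; first by rewrite finset.setDv cards0.
rewrite big_cons addnC.
have sub : final K (r :: rs) u :\: K u \subset (final (step K r) rs u :\: step K r u) :|: rcv r u.
  apply/fintype.subsetP => z; rewrite /step !inE => /andP[zK zF].
  by rewrite zF (negbTE zK) /=; case: (z \in rcv r u).
apply: leq_trans (subset_leq_card sub) _.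
by apply: leq_trans (leq_card_setU _ _) _; rewrite leq_add2r IH.
Qed.

Lemma card_final_setD_le_cost K (rs : seq (round V A B)) u :
  #|final K rs u :\: K u|%:R <= cost w rs * w u.
Proof.
apply: le_trans (_ : _ <= (\sum_(r <- rs) #|rcv r u|)%N%:R) _.
  by rewrite ler_nat card_final_setD_le_rcv.
by rewrite natr_sum /cost mulr_suml; apply: ler_sum => r _; apply: card_rcv_le_round_cost.
Qed.

Lemma card_known_le (T : finType) (f : T -> elt A B) (D : {set T}) K
    (rs : seq (round V A B)) u :
  injective f ->
  #|[set t in D | f t \in final K rs u]|%:R <=
    #|[set t in D | f t \in K u]|%:R + Num.min (cost w rs * w u) #|D|%:R.
Proof.
move=> f_inj; set new := [set t in D | f t \in final K rs u :\: K u].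
have split : [set t in D | f t \in final K rs u] \subset [set t in D | f t \in K u] :|: new.
  apply/fintype.subsetP => t; rewrite !inE => /andP[-> ->].
  by case: (f t \in K u).
have new_cost : #|new|%:R <= cost w rs * w u.
  apply: le_trans (card_final_setD_le_cost K rs u); rewrite ler_nat -(card_imset new f_inj).
  by apply/subset_leq_card/fintype.subsetP => _ /imsetP[t + ->]; rewrite inE => /andP[].
have new_D : (#|new| <= #|D|)%N.
  by apply/subset_leq_card/fintype.subsetP => t; rewrite inE => /andP[].
apply: le_trans (_ : _ <= (#|[set t in D | f t \in K u]| + #|new|)%N%:R) _.
  by rewrite ler_nat; apply: leq_trans (subset_leq_card split) (leq_card_setU _ _).
by rewrite natrD lerD2l le_min new_cost ler_nat new_D.
Qed.

End Execution.

Lemma Vol_le (RR : realType) (V : finType) (w : V -> RR) (r s : nat) (U : {set V}) (C : RR) :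
  0 <= C -> (r * s)%:R <= \sum_(v in U) Num.min (C * w v) r%:R * (C * w v) ->
  Vol w r s U <= C.
Proof. by move=> C0 hC; apply: ge_inf; [exists 0 => c [] | split]. Qed.

Section CboundBounds.
Variables (RR : realType) (V A B : finType) (w : V -> RR).
Variables (Rs : {set A}) (Ss : {set B}) (locA : A -> V) (locB : B -> V) (z : RR).

Lemma Cbound_le_size : #|Ss|%:R / \big[Num.max/0]_v w v <= z -> Cbound w Rs Ss locA locB <= z.
Proof. by move=> hz; rewrite /Cbound /=; case: ifP => _; rewrite ge_min hz. Qed.

Lemma Cbound_le_beta : #|Vbeta Rs Ss locA locB| != 0%N ->
  (\sum_(u in Valpha Rs Ss locA locB) #|Sv Ss locB u|)%N%:R /
    (2 * \sum_(u in Vbeta Rs Ss locA locB) w u) <= z ->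
  Cbound w Rs Ss locA locB <= z.
Proof. by move=> nonempty hz; rewrite /Cbound /= (negbTE nonempty) !ge_min hz orbT. Qed.

Lemma Cbound_le_Vol :
  Vol w #|Rs| (\sum_(u in Valpha Rs Ss locA locB) #|Sv Ss locB u|)%N (Valpha Rs Ss locA locB) <= z ->
  Cbound w Rs Ss locA locB <= z.
Proof. by move=> hz; rewrite /Cbound /=; case: ifP => _; rewrite !ge_min hz !orbT. Qed.

End CboundBounds.

Lemma mul_min_le_scale (R : realDomainType) (c x n : R) : 1 <= c -> 0 <= x ->
  c * (Num.min x n * x) <= Num.min (c * x) n * (c * x).
Proof.
move=> c1 x0; have x_cx : x <= c * x by rewrite ler_peMl.
rewrite mulrCA; apply: ler_wpM2r; first exact: le_trans x_cx.
by rewrite le_min !ge_min x_cx lexx orbT.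
Qed.

Section LowerBound.
Variables (RR : realType) (V A B : finType) (w : V -> RR).
Variables (Rs : {set A}) (Ss : {set B}) (locA : A -> V) (locB : B -> V).
Variable rs : seq (round V A B).
Hypotheses (w_gt0 : forall v, 0 < w v) (R_lt_S : (#|Rs| < #|Ss|)%N).
Hypothesis N_le_half : forall v, (2 * Nv Rs Ss locA locB v <= #|Rs| + #|Ss|)%N.
Hypothesis computes : computes_product Rs Ss (final (init_know Rs Ss locA locB) rs).

Let I := init_know Rs Ss locA locB.
Let K := final I rs.
Let T := cost w rs.
Let Va := Valpha Rs Ss locA locB.
Let Sa := [set y in Ss | locB y \in Va].
Let Sb := [set y in Ss | locB y \notin Va].

Lemma alpha_small u : u \in Va -> (#|Rv Rs locA u| + #|Sv Ss locB u| <= #|Rs|)%N.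
Proof. by rewrite inE; have := N_le_half u; rewrite /Nv; lia. Qed.

Lemma init_know_inl u : [set r in Rs | inl r \in I u] = Rv Rs locA u.
Proof. by apply/setP => r; rewrite !inE; case: (r \in Rs). Qed.

Lemma init_know_inr (P : pred V) u :
  [set y in [set y in Ss | P (locB y)] | inr y \in I u] = if P u then Sv Ss locB u else finset.set0.
Proof.
case Pu: (P u); apply/setP => y; rewrite !inE;
  case: (eqVneq (locB y) u) => [->|_]; rewrite ?Pu ?andbF ?andbT //.
by case: (y \in Ss).
Qed.

Lemma card_known_R u :
  #|[set r in Rs | inl r \in K u]|%:R <= #|Rv Rs locA u|%:R + Num.min (T * w u) #|Rs|%:R.
Proof. by rewrite -init_know_inl; apply: card_known_le => //; apply: inl_inj. Qed.

Lemma card_known_S (P : pred V) u :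
  #|[set y in [set y in Ss | P (locB y)] | inr y \in K u]|%:R <=
    (if P u then #|Sv Ss locB u|%:R else 0) +
    Num.min (T * w u) #|[set y in Ss | P (locB y)]|%:R.
Proof.
apply: le_trans (card_known_le w_gt0 _ _ _ _ inr_inj) _.
by rewrite init_know_inr; case: (P u); rewrite ?cards0.
Qed.

Lemma card_R_mul_le_known (S' : {set B}) : S' \subset Ss ->
  (#|Rs| * #|S'| <=
    \sum_u #|[set r in Rs | inl r \in K u]| * #|[set y in S' | inr y \in K u]|)%N.
Proof.
move=> sub; apply: card_setX_le_sum_cover => r y rR yS.
exact: computes rR (fintype.subsetP sub _ yS).
Qed.

Lemma card_Sa : (\sum_(u in Va) #|Sv Ss locB u| = #|Sa|)%N.
Proof. exact: card_fiber. Qed.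

Lemma card_Sb : (\sum_(u | u \notin Va) #|Sv Ss locB u| = #|Sb|)%N.
Proof. exact: card_fiber. Qed.

Lemma card_Sa_Sb : (#|Sa| + #|Sb| = #|Ss|)%N.
Proof. by rewrite -card_Sa -card_Sb -(sum_card_fiber Ss locB) [RHS](bigID (mem Va)). Qed.

Let W : RR := \big[Num.max/0]_v w v.
Let Wb : RR := \sum_(u in Vbeta Rs Ss locA locB) w u.
Let Q : RR := \sum_(u in Va) Num.min (T * w u) #|Rs|%:R * (T * w u).

Lemma cost_trichotomy :
  #|Ss|%:R <= 192 * (T * W) \/ #|Sa|%:R <= 128 * (T * Wb) \/
  #|Rs|%:R * #|Sa|%:R <= 3168 * Q.
Proof.
have T0 : 0 <= T := cost_ge0 w rs.
have Ss_split : #|Ss|%:R - #|Sa|%:R = #|Sb|%:R :> RR.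
  by rewrite -card_Sa_Sb natrD addrAC subrr add0r.
apply: (@counting_trichotomy RR V (fun u => u \in Va) _ _ _ _ _
  (fun u => #|Rv Rs locA u|%:R) (fun u => #|Sv Ss locB u|%:R) (fun u => T * w u)
  (fun u => #|[set r in Rs | inl r \in K u]|%:R)
  (fun u => #|[set y in Sa | inr y \in K u]|%:R)
  (fun u => #|[set y in Sb | inr y \in K u]|%:R)) => //.
- by rewrite ler_nat ltnW.
- by apply: mulr_ge0 => //; apply: bigmax_ge_id.
- by rewrite -natr_sum sum_card_fiber.
- by rewrite -natr_sum card_Sa.
- by rewrite -natr_sum card_Sb Ss_split.
- by move=> u /alpha_small; rewrite -natrD ler_nat.
- by move=> u; apply: mulr_ge0 => //; apply: ltW.
- by move=> u; rewrite ler_wpM2l //; apply: le_bigmax.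
- rewrite -mulr_sumr (eq_bigl (fun u => u \in Vbeta Rs Ss locA locB)) // => u.
  by rewrite /Vbeta finset.in_setC.
- by move=> u; rewrite ler_nat subset_leq_card // setIdE subsetIl.
- exact: card_known_R.
- exact: (card_known_S (fun v => v \in Va)).
- move=> u; rewrite -if_neg.
  apply: le_trans (card_known_S (fun v => v \notin Va) u) _.
  by rewrite lerD2l ge_min lexx.
- rewrite -natrM; under eq_bigr do rewrite -natrM.
  by rewrite -natr_sum ler_nat card_R_mul_le_known // /Sa setIdE subsetIl.
- rewrite Ss_split -natrM; under eq_bigr do rewrite -natrM.
  by rewrite -natr_sum ler_nat card_R_mul_le_known // /Sb setIdE subsetIl.
Qed.

Lemma Cbound_le_cost : Cbound w Rs Ss locA locB <= 3168 * T.
Proof.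
have T0 : 0 <= T := cost_ge0 w rs.
have wT0 u : 0 <= T * w u by apply: mulr_ge0 => //; apply: ltW.
have Q0 : 0 <= Q.
  by apply: sumr_ge0 => u _; apply: mulr_ge0 => //; rewrite le_min wT0 ler0n.
have by_volume : #|Rs|%:R * #|Sa|%:R <= 3168 * Q -> Cbound w Rs Ss locA locB <= 3168 * T.
  move=> hQ; apply/Cbound_le_Vol/Vol_le; first exact: mulr_ge0.
  rewrite card_Sa natrM; apply: le_trans hQ _; rewrite mulr_sumr.
  by apply: ler_sum => u _; rewrite -!mulrA; apply: mul_min_le_scale; rewrite ?ler1n.
have [by_size | [by_beta | //]] := cost_trichotomy.
- apply: Cbound_le_size.
  have [y yS] : exists y, y \in Ss by apply/card_gt0P; apply: leq_ltn_trans R_lt_S.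
  have W_gt0 : 0 < W by apply: lt_le_trans (w_gt0 (locB y)) (le_bigmax _ _ _).
  rewrite ler_pdivrMr //; apply: le_trans by_size _.
  by rewrite mulrA ler_pM2r //; lra.
- have [empty | nonempty] := eqVneq #|Vbeta Rs Ss locA locB| 0%N.
    have Sa0 : #|Sa|%:R = 0 :> RR.
      apply/eqP; rewrite eq_le ler0n andbT.
      by move: by_beta; rewrite /Wb (cards0_eq empty) big_set0 !mulr0.
    by apply: by_volume; rewrite Sa0 mulr0 mulr_ge0.
  apply: Cbound_le_beta => //.
  have [u0 u0b] : exists u0, u0 \in Vbeta Rs Ss locA locB by apply/card_gt0P; rewrite lt0n.
  have Wb_gt0 : 0 < Wb.
    rewrite /Wb (bigD1 u0) //=; apply: lt_le_trans (w_gt0 u0) _.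
    by rewrite lerDl sumr_ge0 // => u _; apply: ltW.
  rewrite card_Sa ler_pdivrMr ?mulr_gt0 //; apply: le_trans by_beta _.
  by rewrite mulrCA !mulrA ler_pM2r //; lra.
Qed.

End LowerBound.

Theorem theorem9 :
  exists c : rat, 0 < c /\
  forall (RR : realType) (V A B : finType) (w : V -> RR)
         (Rs : {set A}) (Ss : {set B}) (locA : A -> V) (locB : B -> V)
         (rs : seq (round V A B)),
    (forall v, 0 < w v) ->
    (#|Rs| < #|Ss|)%N ->
    (forall v, 2 * Nv Rs Ss locA locB v <= #|Rs| + #|Ss|)%N ->
    exec_ok (init_know Rs Ss locA locB) rs ->
    computes_product Rs Ss (final (init_know Rs Ss locA locB) rs) ->
    ratr c * Cbound w Rs Ss locA locB <= cost w rs.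
Proof.
exists 3168%:R^-1; split; first by rewrite invr_gt0 ltr0n.
move=> RR V A B w Rs Ss locA locB rs w_gt0 R_lt_S N_le_half _ computes.
rewrite fmorphV rmorph_nat ler_pdivrMl ?ltr0n //.
exact: Cbound_le_cost.
Qed.
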